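(* Let $p_2\in H^2_\mathbb{C}$ be the unique fixed point of $G_2$. The indices $j\ge1$ such that $p_2\in\mathcal{B}_j$ are exactly $j\in\{1,2,3,5,10,11\}$. At $p_2$, any two and any three of the six differentials $df_1,df_2,df_3,df_5,df_{10},df_{11}$ are linearly independent, and among the four-element subsets of $\{1,2,3,5,10,11\}$ the only ones whose differentials at $p_2$ are linearly dependent (i.e. whose four bisectors do not meet transversely at $p_2$) are $\{1,2,3,10\}$, $\{1,2,5,11\}$ and $\{3,5,10,11\}$.
   Context: Hermitian form on $\mathbb{C}^3$: $\langle V,W\rangle=V_1\overline{W_3}+V_2\overline{W_2}+V_3\overline{W_1}$. Let $$G_1=\begin{pmatrix}1&1&-\frac{1+i\sqrt7}{2}\\0&1&-1\\0&0&1\end{pmatrix},\quad G_3=\begin{pmatrix}1&0&0\\-1&1&0\\ \frac{-1+i\sqrt7}{2}&1&1\end{pmatrix},\quad G_2=G_3G_1^{-1}G_3^{-1}G_1,$$ $Q=(1,0,0)^T$. Set $\gamma_1=G_2,\gamma_2=G_2^{-1},\gamma_3=G_3,\gamma_4=G_3^{-1}$ and, for $k\ge1$ and $1\le j\le4$, $\gamma_{8k-4+j}=G_1^k\gamma_jG_1^{-k}$, $\gamma_{8k+j}=G_1^{-k}\gamma_jG_1^{k}$ (so $\gamma_5=G_1G_2G_1^{-1}$, $\gamma_{10}=G_1^{-1}G_2^{-1}G_1$, $\gamma_{11}=G_1^{-1}G_3G_1$). For $Z\in\mathbb{C}^3\setminus\{0\}$, $f_j(Z)=|\langle Z,Q\rangle|^2-|\langle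 Z,\gamma_jQ\rangle|^2$, viewed on the affine chart $Z_3\ne0$ of $\mathbb{C}P^2\cong$ (locally) $\mathbb{R}^4$; $\mathcal{B}_j=\{[Z]: f_j(Z)=0,\ \langle Z,Z\rangle<0\}$. Differentials are real differentials at $p_2$. *)

From Stdlib Require Import Reals Lra Lia Psatz List.
Import ListNotations.
Open Scope R_scope.

Record C := mkC { re : R; im : R }.
Definition C0 : C := mkC 0 0.
Definition C1 : C := mkC 1 0.
Definition RtoC (x : R) : C := mkC x 0.
Definition Cadd (z w : C) : C := mkC (re z + re w) (im z + im w).
Definition Copp (z : C) : C := mkC (- re z) (- im z).
Definition Csub (z w : C) : C := Cadd z (Copp w).
Definition Cmul (z w : C) : C :=
  mkC (re z * re w - im z * im w) (re z * im w + im z * re w).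
Definition Cconj (z : C) : C := mkC (re z) (- im z).
Definition Cnorm2 (z : C) : R := re z * re z + im z * im z.
Definition Cinv (z : C) : C := mkC (re z / Cnorm2 z) (- im z / Cnorm2 z).

Record V3 := mkV3 { v0 : C; v1 : C; v2 : C }.
Definition Vscale (l : C) (v : V3) : V3 := mkV3 (Cmul l (v0 v)) (Cmul l (v1 v)) (Cmul l (v2 v)).

Definition herm (V W : V3) : C :=
  Cadd (Cmul (v0 V) (Cconj (v2 W)))
       (Cadd (Cmul (v1 V) (Cconj (v1 W))) (Cmul (v2 V) (Cconj (v0 W)))).

(* a matrix is given by its entries A i j, 0 <= i, j <= 2 *)
Definition mat := nat -> nat -> C.
Definition mmul (A B : mat) : mat := fun i j =>
  Cadd (Cmul (A i 0%nat) (B 0%nat j))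
       (Cadd (Cmul (A i 1%nat) (B 1%nat j)) (Cmul (A i 2%nat) (B 2%nat j))).
Definition mvec (A : mat) (v : V3) : V3 :=
  mkV3 (Cadd (Cmul (A 0%nat 0%nat) (v0 v)) (Cadd (Cmul (A 0%nat 1%nat) (v1 v)) (Cmul (A 0%nat 2%nat) (v2 v))))
       (Cadd (Cmul (A 1%nat 0%nat) (v0 v)) (Cadd (Cmul (A 1%nat 1%nat) (v1 v)) (Cmul (A 1%nat 2%nat) (v2 v))))
       (Cadd (Cmul (A 2%nat 0%nat) (v0 v)) (Cadd (Cmul (A 2%nat 1%nat) (v1 v)) (Cmul (A 2%nat 2%nat) (v2 v)))).
Definition mid : mat := fun i j => if Nat.eqb i j then C1 else C0.
Fixpoint mpow (A : mat) (k : nat) : mat :=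
  match k with O => mid | S k' => mmul A (mpow A k') end.

Definition det (A : mat) : C :=
  let a := A in
  Csub (Cadd (Cmul (a 0%nat 0%nat) (Csub (Cmul (a 1%nat 1%nat) (a 2%nat 2%nat)) (Cmul (a 1%nat 2%nat) (a 2%nat 1%nat))))
             (Cmul (a 0%nat 2%nat) (Csub (Cmul (a 1%nat 0%nat) (a 2%nat 1%nat)) (Cmul (a 1%nat 1%nat) (a 2%nat 0%nat)))))
       (Cmul (a 0%nat 1%nat) (Csub (Cmul (a 1%nat 0%nat) (a 2%nat 2%nat)) (Cmul (a 1%nat 2%nat) (a 2%nat 0%nat)))).
(* cofactor-based adjugate: adj A i j = cofactor of entry (j,i) *)
Definition adj (A : mat) : mat := fun i j =>
  let j1 := ((j + 1) mod 3)%nat in let j2 := ((j + 2) mod 3)%nat in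
  let i1 := ((i + 1) mod 3)%nat in let i2 := ((i + 2) mod 3)%nat in
  Csub (Cmul (A j1 i1) (A j2 i2)) (Cmul (A j1 i2) (A j2 i1)).
Definition minv (A : mat) : mat := fun i j => Cmul (Cinv (det A)) (adj A i j).

Definition s7 : R := sqrt 7.

Definition G1 : mat := fun i j =>
  match i, j with
  | 0, 0 => C1 | 0, 1 => C1 | 0, 2 => mkC (-1/2) (- s7 / 2)
  | 1, 1 => C1 | 1, 2 => mkC (-1) 0
  | 2, 2 => C1
  | _, _ => C0
  end%nat.

Definition G3 : mat := fun i j =>
  match i, j with
  | 0, 0 => C1
  | 1, 0 => mkC (-1) 0 | 1, 1 => C1
  | 2, 0 => mkC (-1/2) (s7 / 2) | 2, 1 => C1 | 2, 2 => C1
  | _, _ => C0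
  end%nat.

Definition G2 : mat := mmul (mmul (mmul G3 (minv G1)) (minv G3)) G1.

Definition Qv : V3 := mkV3 C1 C0 C0.

Definition gamma_base (j : nat) : mat :=
  match j with
  | 1 => G2 | 2 => minv G2 | 3 => G3 | _ => minv G3
  end%nat.

(* For k >= 1 and 1 <= j' <= 4:
     gamma_(8k-4+j') = G1^k gamma_j' G1^-k,  gamma_(8k+j') = G1^-k gamma_j' G1^k.
   For j >= 5 write j - 5 = 8q + r (0 <= r < 8), k = q+1. (gamma 0 is unused.) *)
Definition gamma (j : nat) : mat :=
  if (j <=? 4)%nat then gamma_base j
  else
    let q := ((j - 5) / 8)%nat in
    let r := ((j - 5) mod 8)%nat in
    let k := S q in
    if (r <? 4)%nat
    then mmul (mmul (mpow G1 k) (gamma_base (S r))) (mpow (minv G1) k)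
    else mmul (mmul (mpow (minv G1) k) (gamma_base (r - 3))) (mpow G1 k).

Definition f (j : nat) (Z : V3) : R :=
  Cnorm2 (herm Z Qv) - Cnorm2 (herm Z (mvec (gamma j) Qv)).

Record R4 := mkR4 { x0 : R; x1 : R; x2 : R; x3 : R }.
Definition R4add (p h : R4) : R4 := mkR4 (x0 p + x0 h) (x1 p + x1 h) (x2 p + x2 h) (x3 p + x3 h).
Definition R4scale (c : R) (h : R4) : R4 := mkR4 (c * x0 h) (c * x1 h) (c * x2 h) (c * x3 h).
Definition R4norm (h : R4) : R :=
  sqrt (x0 h * x0 h + x1 h * x1 h + x2 h * x2 h + x3 h * x3 h).

Definition chart (p : R4) : V3 := mkV3 (mkC (x0 p) (x1 p)) (mkC (x2 p) (x3 p)) C1.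

Definition fchart (j : nat) (p : R4) : R := f j (chart p).

(* complex hyperbolic plane (it lies entirely in the chart Z3 <> 0) *)
Definition in_H2C (p : R4) : Prop := re (herm (chart p) (chart p)) < 0.

Definition fixed_by_G2 (p : R4) : Prop :=
  in_H2C p /\ exists l : C, mvec G2 (chart p) = Vscale l (chart p).

Definition in_bisector (j : nat) (p : R4) : Prop := fchart j p = 0 /\ in_H2C p.

Definition R_linear (L : R4 -> R) : Prop :=
  (forall h k, L (R4add h k) = L h + L k) /\ (forall c h, L (R4scale c h) = c * L h).

Definition is_differential (F : R4 -> R) (p : R4) (L : R4 -> R) : Prop :=
  R_linear L /\
  forall eps, 0 < eps -> exists delta, 0 < delta /\
    forall h, R4norm h < delta -> Rabs (F (R4add p h) - F p - L h) <= eps * R4norm h.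

Fixpoint lin_comb (cs : list R) (Ls : list (R4 -> R)) (h : R4) : R :=
  match cs, Ls with
  | c :: cs', L :: Ls' => c * L h + lin_comb cs' Ls' h
  | _, _ => 0
  end.

Definition lin_indep (Ls : list (R4 -> R)) : Prop :=
  forall cs : list R, length cs = length Ls ->
    (forall h, lin_comb cs Ls h = 0) -> forall c, In c cs -> c = 0.

Definition six : list nat := [1; 2; 3; 5; 10; 11]%nat.

(* Since G1 fixes Q, the vectors
   gamma_j Q for j >= 5 are G1^k or G1^-k applied to gamma_1 Q, ..., gamma_4 Q, and G1^k acts by
   polynomials in k; so on each of the eight index classes f_j(p2) is a quartic in k, which either
   vanishes exactly at k = 1 or is negative.  Each f_j is a difference of squared moduli of affine
   functions of the chart, so its differential at p2 is explicit; in the coordinates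
   (dx0, sqrt 7 dx1, dx2, sqrt 7 dx3) the six differentials have rational coefficients, and their
   (in)dependence is a finite rational linear-algebra check. *)

From Pilot Require Import Defs.
From Stdlib Require Import Reals List Permutation Lra Lia Psatz FunctionalExtensionality.
Import ListNotations.
Open Scope R_scope.

Lemma s7_sqr : s7 * s7 = 7.
Proof. unfold s7; apply sqrt_sqrt; lra. Qed.

Lemma s7_pos : 0 < s7.
Proof. unfold s7; apply sqrt_lt_R0; lra. Qed.

Lemma s7_pow_SS n : s7 ^ S (S n) = 7 * s7 ^ n.
Proof. cbn [pow]. rewrite <- Rmult_assoc, s7_sqr. ring. Qed.

Ltac s7_ring := unfold Rdiv; ring_simplify; repeat rewrite s7_pow_SS; field.

Ltac cunfold :=
  cbv [Cadd Copp Csub Cmul Cconj Cnorm2 Cinv RtoC Defs.C0 Defs.C1 herm mvec Vscale chart Qv] in *;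
  cbn [re im v0 v1 v2 x0 x1 x2 x3] in *.

Ltac vec_eq :=
  (lazymatch goal with |- mkV3 _ _ _ = mkV3 _ _ _ => apply f_equal3 | _ => idtac end);
  (lazymatch goal with |- mkC _ _ = mkC _ _ => apply f_equal2 | _ => idtac end);
  s7_ring.

Definition cvec (a b c d e g : R) : V3 := mkV3 (mkC a b) (mkC c d) (mkC e g).

Lemma mvec_mmul A B v : mvec (mmul A B) v = mvec A (mvec B v).
Proof. destruct v as [[a b] [c d] [e g]]. unfold mmul. cunfold. vec_eq. Qed.

Lemma mvec_mid v : mvec mid v = v.
Proof. destruct v as [[a b] [c d] [e g]]. cbv [mid Nat.eqb]. cunfold. vec_eq. Qed.

Lemma mvec_mpow_fixed A v k : mvec A v = v -> mvec (mpow A k) v = v.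
Proof.
  intros Hv. induction k as [|k IH]; cbn [mpow]; [apply mvec_mid|].
  now rewrite mvec_mmul, IH, Hv.
Qed.

Lemma C_eta z : z = mkC (re z) (im z).
Proof. now destruct z. Qed.

Lemma mvec_basis A :
  mvec A (cvec 1 0 0 0 0 0) = mkV3 (A 0%nat 0%nat) (A 1%nat 0%nat) (A 2%nat 0%nat) /\
  mvec A (cvec 0 0 1 0 0 0) = mkV3 (A 0%nat 1%nat) (A 1%nat 1%nat) (A 2%nat 1%nat) /\
  mvec A (cvec 0 0 0 0 1 0) = mkV3 (A 0%nat 2%nat) (A 1%nat 2%nat) (A 2%nat 2%nat).
Proof.
  unfold cvec; cunfold.
  repeat split; apply f_equal3;
    match goal with |- _ = ?z => transitivity (mkC (re z) (im z)); [f_equal; ring | symmetry; apply C_eta] end.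
Qed.

Lemma det_G1 : det G1 = Defs.C1.
Proof. unfold det, G1. cunfold. vec_eq. Qed.

Lemma det_G3 : det G3 = Defs.C1.
Proof. unfold det, G3. cunfold. vec_eq. Qed.

Ltac minv_unfold det_eq :=
  unfold minv; rewrite det_eq; cbv [adj G1 G3 cvec Nat.modulo Nat.divmod Nat.add Nat.sub snd fst].

Lemma mvec_G1 a b c d e g : mvec G1 (cvec a b c d e g) =
  cvec (a + c - e/2 + s7*g/2) (b + d - s7*e/2 - g/2) (c - e) (d - g) e g.
Proof. unfold G1, cvec. cunfold. vec_eq. Qed.

Lemma mvec_G1_inv a b c d e g : mvec (minv G1) (cvec a b c d e g) =
  cvec (a - c - e/2 - s7*g/2) (b - d + s7*e/2 - g/2) (c + e) (d + g) e g.
Proof. minv_unfold det_G1. cunfold. vec_eq. Qed.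

Lemma mvec_G3 a b c d e g : mvec G3 (cvec a b c d e g) =
  cvec a b (c - a) (d - b) (e + c - a/2 - s7*b/2) (g + d + s7*a/2 - b/2).
Proof. unfold G3, cvec. cunfold. vec_eq. Qed.

Lemma mvec_G3_inv a b c d e g : mvec (minv G3) (cvec a b c d e g) =
  cvec a b (c + a) (d + b) (e - c - a/2 + s7*b/2) (g - d - s7*a/2 - b/2).
Proof. minv_unfold det_G3. cunfold. vec_eq. Qed.

Lemma mvec_G2 a b c d e g : mvec G2 (cvec a b c d e g) =
  cvec (2*a + 3*c/2 + s7*d/2 - e) (2*b + 3*d/2 - s7*c/2 - g)
       (-3*a/2 + s7*b/2 - c) (-3*b/2 - s7*a/2 - d) (-a) (-b).
Proof.
  unfold G2. rewrite !mvec_mmul, mvec_G1, mvec_G3_inv, mvec_G1_inv, mvec_G3.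
  unfold cvec. vec_eq.
Qed.

Lemma mvec_G1_pow k a b c d e g : mvec (mpow G1 k) (cvec a b c d e g) =
  cvec (a + INR k*(c - e/2 + s7*g/2) - INR k*(INR k-1)/2*e)
       (b + INR k*(d - s7*e/2 - g/2) - INR k*(INR k-1)/2*g)
       (c - INR k*e) (d - INR k*g) e g.
Proof.
  induction k as [|k IH]; cbn [mpow].
  - rewrite mvec_mid. cbn [INR]. unfold cvec. vec_eq.
  - rewrite mvec_mmul, IH, mvec_G1, S_INR. unfold cvec. vec_eq.
Qed.

Lemma mvec_G1_inv_pow k a b c d e g : mvec (mpow (minv G1) k) (cvec a b c d e g) =
  cvec (a - INR k*(c - e/2 + s7*g/2) - INR k*(INR k+1)/2*e)
       (b - INR k*(d - s7*e/2 - g/2) - INR k*(INR k+1)/2*g)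
       (c + INR k*e) (d + INR k*g) e g.
Proof.
  induction k as [|k IH]; cbn [mpow].
  - rewrite mvec_mid. cbn [INR]. unfold cvec. vec_eq.
  - rewrite mvec_mmul, IH, mvec_G1_inv, S_INR. unfold cvec. vec_eq.
Qed.

Lemma G2_columns :
  mkV3 (G2 0%nat 0%nat) (G2 1%nat 0%nat) (G2 2%nat 0%nat) = cvec 2 0 (-3/2) (-s7/2) (-1) 0 /\
  mkV3 (G2 0%nat 1%nat) (G2 1%nat 1%nat) (G2 2%nat 1%nat) = cvec (3/2) (-s7/2) (-1) 0 0 0 /\
  mkV3 (G2 0%nat 2%nat) (G2 1%nat 2%nat) (G2 2%nat 2%nat) = cvec (-1) 0 0 0 0 0.
Proof.
  destruct (mvec_basis G2) as (E0 & E1 & E2).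
  rewrite <- E0, <- E1, <- E2, !mvec_G2. repeat split; unfold cvec; vec_eq.
Qed.

Lemma G2_inv_Q : mvec (minv G2) Qv = cvec 0 0 0 0 (-1) 0.
Proof.
  destruct G2_columns as (E0 & E1 & E2).
  pose proof (f_equal v0 E0) as e00; pose proof (f_equal v1 E0) as e10; pose proof (f_equal v2 E0) as e20.
  pose proof (f_equal v0 E1) as e01; pose proof (f_equal v1 E1) as e11; pose proof (f_equal v2 E1) as e21.
  pose proof (f_equal v0 E2) as e02; pose proof (f_equal v1 E2) as e12; pose proof (f_equal v2 E2) as e22.
  cbn [v0 v1 v2 cvec] in *.
  assert (Hdet : det G2 = Defs.C1).
  { unfold det. rewrite e00, e10, e20, e01, e11, e21, e02, e12, e22. cunfold. vec_eq. }
  unfold minv. rewrite Hdet. cbv [adj Nat.modulo Nat.divmod Nat.add Nat.sub snd fst].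
  unfold cvec. cunfold. rewrite ?e00, ?e10, ?e20, ?e01, ?e11, ?e21, ?e02, ?e12, ?e22. cbn [re im]. vec_eq.
Qed.

Lemma Qv_cvec : Qv = cvec 1 0 0 0 0 0.
Proof. reflexivity. Qed.

Lemma G1_Q : mvec G1 Qv = Qv.
Proof. rewrite Qv_cvec, mvec_G1. unfold cvec. vec_eq. Qed.

Lemma G1_inv_Q : mvec (minv G1) Qv = Qv.
Proof. rewrite Qv_cvec, mvec_G1_inv. unfold cvec. vec_eq. Qed.

Definition w1 : V3 := cvec 2 0 (-3/2) (-s7/2) (-1) 0.
Definition w2 : V3 := cvec 0 0 0 0 (-1) 0.
Definition w3 : V3 := cvec 1 0 (-1) 0 (-1/2) (s7/2).
Definition w4 : V3 := cvec 1 0 1 0 (-1/2) (-s7/2).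

Lemma gamma_1_Q : mvec (gamma 1) Qv = w1.
Proof. change (gamma 1) with G2. rewrite Qv_cvec, mvec_G2. unfold w1, cvec. vec_eq. Qed.

Lemma gamma_2_Q : mvec (gamma 2) Qv = w2.
Proof. exact G2_inv_Q. Qed.

Lemma gamma_3_Q : mvec (gamma 3) Qv = w3.
Proof. change (gamma 3) with G3. rewrite Qv_cvec, mvec_G3. unfold w3, cvec. vec_eq. Qed.

Lemma gamma_4_Q : mvec (gamma 4) Qv = w4.
Proof. change (gamma 4) with (minv G3). rewrite Qv_cvec, mvec_G3_inv. unfold w4, cvec. vec_eq. Qed.

Lemma gamma_conj_G1 q r : (r < 4)%nat ->
  gamma (5 + 8*q + r) = mmul (mmul (mpow G1 (S q)) (gamma (S r))) (mpow (minv G1) (S q)).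
Proof.
  intros Hr. unfold gamma at 1.
  replace ((5 + 8*q + r) <=? 4)%nat with false by (symmetry; apply Nat.leb_gt; lia).
  replace ((5 + 8*q + r - 5) / 8)%nat with q by (apply (Nat.div_unique _ _ _ r); lia).
  replace ((5 + 8*q + r - 5) mod 8)%nat with r by (apply (Nat.mod_unique _ _ q); lia).
  replace (r <? 4)%nat with true by (symmetry; apply Nat.ltb_lt; lia).
  destruct r as [|[|[|[|r]]]]; try lia; reflexivity.
Qed.

Lemma gamma_conj_G1_inv q r : (r < 4)%nat ->
  gamma (5 + 8*q + (4 + r)) = mmul (mmul (mpow (minv G1) (S q)) (gamma (S r))) (mpow G1 (S q)).
Proof.
  intros Hr. unfold gamma at 1.
  replace ((5 + 8*q + (4 + r)) <=? 4)%nat with false by (symmetry; apply Nat.leb_gt; lia).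
  replace ((5 + 8*q + (4 + r) - 5) / 8)%nat with q by (apply (Nat.div_unique _ _ _ (4 + r)); lia).
  replace ((5 + 8*q + (4 + r) - 5) mod 8)%nat with (4 + r)%nat by (apply (Nat.mod_unique _ _ q); lia).
  replace (4 + r <? 4)%nat with false by (symmetry; apply Nat.ltb_ge; lia).
  replace (4 + r - 3)%nat with (S r) by lia.
  destruct r as [|[|[|[|r]]]]; try lia; reflexivity.
Qed.

Lemma gamma_conj_G1_Q q r : (r < 4)%nat ->
  mvec (gamma (5 + 8*q + r)) Qv = mvec (mpow G1 (S q)) (mvec (gamma (S r)) Qv).
Proof.
  intros Hr. now rewrite gamma_conj_G1, !mvec_mmul, (mvec_mpow_fixed _ _ _ G1_inv_Q).
Qed.

Lemma gamma_conj_G1_inv_Q q r : (r < 4)%nat ->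
  mvec (gamma (5 + 8*q + (4 + r))) Qv = mvec (mpow (minv G1) (S q)) (mvec (gamma (S r)) Qv).
Proof.
  intros Hr. now rewrite gamma_conj_G1_inv, !mvec_mmul, (mvec_mpow_fixed _ _ _ G1_Q).
Qed.

Definition p2 : R4 := mkR4 (-1) 0 (3/4) (s7/4).

Definition fp2 (W : V3) : R := Cnorm2 (herm (chart p2) Qv) - Cnorm2 (herm (chart p2) W).

Ltac fp2_compute :=
  unfold fp2, w1, w2, w3, w4; rewrite ?mvec_G1_pow, ?mvec_G1_inv_pow;
  unfold cvec, p2; cunfold; s7_ring.

Lemma fp2_w : fp2 w1 = 0 /\ fp2 w2 = 0 /\ fp2 w3 = 0 /\ fp2 w4 = -9/2.
Proof. repeat split; fp2_compute. Qed.

Lemma INR_eq_1 k : INR k = 1 <-> k = 1%nat.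
Proof. split; intros H; [now apply INR_eq | now subst]. Qed.

Lemma vanishing_factor_iff t P : 1 <= t -> 0 < P -> (- t / 4 * ((t - 1) * P) = 0 <-> t = 1).
Proof.
  intros Ht HP. split; intros H; [|subst; ring].
  destruct (Rmult_integral _ _ H) as [H0|H0]; [lra|].
  destruct (Rmult_integral _ _ H0); lra.
Qed.

Section G1_orbits.

Variable k : nat.
Hypothesis Hk : (1 <= k)%nat.
Let t := INR k.
Let Ht : 1 <= t := le_INR 1 k Hk.

Lemma fp2_G1_pow_w1 : fp2 (mvec (mpow G1 k) w1) = 0 <-> k = 1%nat.
Proof.
  replace (fp2 _) with (- t / 4 * ((t - 1) * (t*t - 2*t + 6))) by (unfold t; fp2_compute).
  rewrite vanishing_factor_iff by nra. apply INR_eq_1.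
Qed.

Lemma fp2_G1_pow_w2 : fp2 (mvec (mpow G1 k) w2) < 0.
Proof.
  replace (fp2 _) with (- t / 4 * (t*t*t + 3*t*t + 8*t + 6)) by (unfold t; fp2_compute). nra.
Qed.

Lemma fp2_G1_pow_w3 : fp2 (mvec (mpow G1 k) w3) < 0.
Proof.
  replace (fp2 _) with (- t / 4 * (2*t*t*t + 4*t*t + 7*t + 5)) by (unfold t; fp2_compute). nra.
Qed.

Lemma fp2_G1_pow_w4 : fp2 (mvec (mpow G1 k) w4) < 0.
Proof.
  replace (fp2 _) with (- / 2 * (t*t*t*t + 4*t*t*t + 8*t*t + 8*t + 9)) by (unfold t; fp2_compute). nra.
Qed.

Lemma fp2_G1_inv_pow_w1 : fp2 (mvec (mpow (minv G1) k) w1) < 0.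
Proof.
  replace (fp2 _) with (- t / 4 * (t*t*t + 3*t*t + 8*t + 6)) by (unfold t; fp2_compute). nra.
Qed.

Lemma fp2_G1_inv_pow_w2 : fp2 (mvec (mpow (minv G1) k) w2) = 0 <-> k = 1%nat.
Proof.
  replace (fp2 _) with (- t / 4 * ((t - 1) * (t*t - 2*t + 6))) by (unfold t; fp2_compute).
  rewrite vanishing_factor_iff by nra. apply INR_eq_1.
Qed.

Lemma fp2_G1_inv_pow_w3 : fp2 (mvec (mpow (minv G1) k) w3) = 0 <-> k = 1%nat.
Proof.
  replace (fp2 _) with (- t / 4 * ((t - 1) * (2*t*t - 2*t + 5))) by (unfold t; fp2_compute).
  rewrite vanishing_factor_iff by nra. apply INR_eq_1.
Qed.

Lemma fp2_G1_inv_pow_w4 : fp2 (mvec (mpow (minv G1) k) w4) < 0.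
Proof.
  replace (fp2 _) with (- / 2 * ((t*t - 2*t) * (t*t - 2*t) + 4 * ((t - 1) * (t - 1)) + 5))
    by (unfold t; fp2_compute). nra.
Qed.

End G1_orbits.

Lemma fchart_p2_zero_iff j : (1 <= j)%nat -> (fchart j p2 = 0 <-> In j six).
Proof.
  intros Hj. change (fchart j p2) with (fp2 (mvec (gamma j) Qv)). cbn [six In].
  destruct fp2_w as (F1 & F2 & F3 & F4).
  destruct (Nat.le_gt_cases j 4) as [Hle|Hgt].
  { destruct j as [|[|[|[|[|j]]]]]; try lia;
      rewrite ?gamma_1_Q, ?gamma_2_Q, ?gamma_3_Q, ?gamma_4_Q, ?F1, ?F2, ?F3, ?F4;
      split; intros; try lra; lia. }
  pose proof (Nat.div_mod_eq (j - 5) 8).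
  pose proof (Nat.mod_upper_bound (j - 5) 8 ltac:(lia)).
  replace j with (5 + 8 * ((j - 5) / 8) + (j - 5) mod 8)%nat by lia.
  generalize dependent ((j - 5) mod 8)%nat. generalize ((j - 5) / 8)%nat.
  intros q r _ Hr. clear Hj Hgt. assert (Hq : (1 <= S q)%nat) by lia.
  destruct (Nat.lt_ge_cases r 4) as [Hr4|Hr4].
  - rewrite gamma_conj_G1_Q by exact Hr4.
    destruct r as [|[|[|[|r]]]]; try lia;
      rewrite ?gamma_1_Q, ?gamma_2_Q, ?gamma_3_Q, ?gamma_4_Q.
    + rewrite fp2_G1_pow_w1 by exact Hq. lia.
    + pose proof (fp2_G1_pow_w2 _ Hq). split; intros; [lra|lia].
    + pose proof (fp2_G1_pow_w3 _ Hq). split; intros; [lra|lia].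
    + pose proof (fp2_G1_pow_w4 _ Hq). split; intros; [lra|lia].
  - replace r with (4 + (r - 4))%nat by lia.
    rewrite gamma_conj_G1_inv_Q by lia.
    remember (r - 4)%nat as r' eqn:Er.
    destruct r' as [|[|[|[|r']]]]; try lia;
      rewrite ?gamma_1_Q, ?gamma_2_Q, ?gamma_3_Q, ?gamma_4_Q.
    + pose proof (fp2_G1_inv_pow_w1 _ Hq). split; intros; [lra|lia].
    + rewrite fp2_G1_inv_pow_w2 by exact Hq. lia.
    + rewrite fp2_G1_inv_pow_w3 by exact Hq. lia.
    + pose proof (fp2_G1_inv_pow_w4 _ Hq). split; intros; [lra|lia].
Qed.

Lemma chart_cvec p : chart p = cvec (x0 p) (x1 p) (x2 p) (x3 p) 1 0.
Proof. reflexivity. Qed.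

Lemma p2_fixed : fixed_by_G2 p2.
Proof.
  split.
  - unfold in_H2C, p2. cunfold. pose proof s7_sqr. nra.
  - exists Defs.C1. rewrite chart_cvec, mvec_G2. unfold p2, cvec. cunfold. vec_eq.
Qed.

(* The eigenvalue is -z1, as the last row of G2 is (-1, 0, 0).  Eliminating z2 from the first two
   rows leaves (z1 + 1)(z1^2 + 1) = 0, and z1 = ±i is excluded by <Z,Z> = 2 Re z1 + |z2|^2 < 0. *)
Lemma fixed_by_G2_unique q : fixed_by_G2 q -> q = p2.
Proof.
  destruct q as [a b c d]. intros [Hneg [[lr li] H]]. unfold in_H2C in Hneg.
  rewrite chart_cvec, mvec_G2 in H. unfold cvec, Vscale in H. cunfold.
  injection H as h1 h2 h3 h4 h5 h6.
  assert (lr = -a) as -> by lra. assert (li = -b) as -> by lra.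
  assert (R1 : 2*a + 3*c/2 + s7*d/2 - 1 + a*a - b*b = 0) by lra.
  assert (R2 : 2*b + 3*d/2 - s7*c/2 + 2*a*b = 0) by lra.
  assert (R3 : -3*a/2 + s7*b/2 - c + a*c - b*d = 0) by lra.
  assert (R4 : -3*b/2 - s7*a/2 - d + a*d + b*c = 0) by lra.
  assert (Pr : (a+1)*(a*a-b*b+1) - b*(2*a*b) = 0).
  { transitivity ((a-1)*(2*a + 3*c/2 + s7*d/2 - 1 + a*a - b*b) - b*(2*b + 3*d/2 - s7*c/2 + 2*a*b)
      - (3/2*(-3*a/2 + s7*b/2 - c + a*c - b*d) + s7/2*(-3*b/2 - s7*a/2 - d + a*d + b*c)));
      [s7_ring | rewrite R1, R2, R3, R4; ring]. }
  assert (Pi : (a+1)*(2*a*b) + b*(a*a-b*b+1) = 0).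
  { transitivity ((a-1)*(2*b + 3*d/2 - s7*c/2 + 2*a*b) + b*(2*a + 3*c/2 + s7*d/2 - 1 + a*a - b*b)
      - (3/2*(-3*b/2 - s7*a/2 - d + a*d + b*c) - s7/2*(-3*a/2 + s7*b/2 - c + a*c - b*d)));
      [s7_ring | rewrite R1, R2, R3, R4; ring]. }
  assert (N : ((a+1)*(a+1)+b*b) * ((a*a-b*b+1)*(a*a-b*b+1) + (2*a*b)*(2*a*b)) = 0).
  { transitivity (((a+1)*(a*a-b*b+1) - b*(2*a*b))^2 + ((a+1)*(2*a*b) + b*(a*a-b*b+1))^2); [ring|].
    rewrite Pr, Pi. ring. }
  destruct (Rmult_integral _ _ N) as [N1|N1].
  - assert (a = -1) by nra. assert (b = 0) by nra. subst a b.
    unfold p2. f_equal; lra.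
  - assert (b * b = a * a + 1) by nra. assert (a * b = 0) by nra. nra.
Qed.

Definition sq4 (h : R4) : R := x0 h * x0 h + x1 h * x1 h + x2 h * x2 h + x3 h * x3 h.

Lemma R4norm_sqr h : R4norm h * R4norm h = sq4 h.
Proof. apply sqrt_sqrt. unfold sq4. nra. Qed.

Lemma is_differential_of_quadratic_bound F p L K :
  R_linear L -> 0 <= K ->
  (forall h, Rabs (F (R4add p h) - F p - L h) <= K * sq4 h) ->
  is_differential F p L.
Proof.
  intros HL HK Hbound. split; [exact HL|]. intros eps Heps.
  exists (eps / (K + 1)). split; [apply Rdiv_lt_0_compat; lra|].
  intros h Hh. eapply Rle_trans; [apply Hbound|].
  rewrite <- R4norm_sqr.
  assert (Hn : 0 <= R4norm h) by apply sqrt_pos.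
  assert (Hd : (K + 1) * R4norm h <= eps).
  { apply Rlt_le. apply (Rmult_lt_compat_l (K + 1)) in Hh; [|lra].
    replace ((K + 1) * (eps / (K + 1))) with eps in Hh by (field; lra). exact Hh. }
  nra.
Qed.

(* The chart is affine: [chart (R4add p h)] is [chart p] plus [lin h]. *)
Definition lin (h : R4) : V3 := mkV3 (mkC (x0 h) (x1 h)) (mkC (x2 h) (x3 h)) Defs.C0.

Definition dnorm2 (W : V3) (p h : R4) : R :=
  2 * (re (herm (chart p) W) * re (herm (lin h) W) + im (herm (chart p) W) * im (herm (lin h) W)).

Lemma dnorm2_linear W p : R_linear (dnorm2 W p).
Proof.
  destruct W as [[a b] [c d] [e g]], p as [p0 p1 p3 p4].
  split; [intros [h0 h1 h2 h3] [k0 k1 k2 k3] | intros s [h0 h1 h2 h3]];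
    unfold dnorm2, lin, R4add, R4scale; cunfold; ring.
Qed.

Lemma norm2_herm_chart_add W p h :
  Cnorm2 (herm (chart (R4add p h)) W) =
  Cnorm2 (herm (chart p) W) + dnorm2 W p h + Cnorm2 (herm (lin h) W).
Proof.
  destruct W as [[a b] [c d] [e g]], p as [p0 p1 p3 p4], h as [h0 h1 h2 h3].
  unfold dnorm2, lin, R4add. cunfold. ring.
Qed.

Lemma norm2_herm_lin_le W h :
  Cnorm2 (herm (lin h) W) <= 2 * (Cnorm2 (v1 W) + Cnorm2 (v2 W)) * sq4 h.
Proof.
  destruct W as [[a b] [c d] [e g]], h as [h0 h1 h2 h3]. unfold sq4, lin. cunfold.
  set (ur := h0*e + h1*g). set (ui := h1*e - h0*g).
  set (vr := h2*c + h3*d). set (vi := h3*c - h2*d).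
  match goal with |- ?L <= _ =>
    replace L with ((ur+vr)*(ur+vr) + (ui+vi)*(ui+vi)) by (unfold ur, ui, vr, vi; ring) end.
  assert (Eu : ur*ur + ui*ui = (h0*h0+h1*h1)*(e*e+g*g)) by (unfold ur, ui; ring).
  assert (Ev : vr*vr + vi*vi = (h2*h2+h3*h3)*(c*c+d*d)) by (unfold vr, vi; ring).
  clearbody ur ui vr vi.
  assert ((ur+vr)*(ur+vr) + (ui+vi)*(ui+vi) <= 2*(ur*ur+ui*ui) + 2*(vr*vr+vi*vi))
    by (pose proof (Rle_0_sqr (ur - vr)); pose proof (Rle_0_sqr (ui - vi)); unfold Rsqr in *; lra).
  assert ((h0*h0+h1*h1)*(e*e+g*g) <= (h0*h0+h1*h1+h2*h2+h3*h3)*(e*e+g*g)) by nra.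
  assert ((h2*h2+h3*h3)*(c*c+d*d) <= (h0*h0+h1*h1+h2*h2+h3*h3)*(c*c+d*d)) by nra.
  nra.
Qed.

Lemma is_differential_norm2_herm_sub W1 W2 p :
  is_differential (fun q => Cnorm2 (herm (chart q) W1) - Cnorm2 (herm (chart q) W2)) p
                  (fun h => dnorm2 W1 p h - dnorm2 W2 p h).
Proof.
  set (K1 := 2 * (Cnorm2 (v1 W1) + Cnorm2 (v2 W1))).
  set (K2 := 2 * (Cnorm2 (v1 W2) + Cnorm2 (v2 W2))).
  apply is_differential_of_quadratic_bound with (K := K1 + K2).
  - destruct (dnorm2_linear W1 p) as [A1 S1], (dnorm2_linear W2 p) as [A2 S2].
    split; intros; rewrite ?A1, ?A2, ?S1, ?S2; ring.
  - assert (0 <= K1) by (unfold K1, Cnorm2; nra). assert (0 <= K2) by (unfold K2, Cnorm2; nra). lra.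
  - intros h. rewrite !norm2_herm_chart_add.
    pose proof (norm2_herm_lin_le W1 h) as B1. pose proof (norm2_herm_lin_le W2 h) as B2.
    fold K1 in B1. fold K2 in B2.
    assert (0 <= Cnorm2 (herm (lin h) W1)) by (unfold Cnorm2; nra).
    assert (0 <= Cnorm2 (herm (lin h) W2)) by (unfold Cnorm2; nra).
    apply Rabs_le. split; nra.
Qed.

Definition df (j : nat) (h : R4) : R := dnorm2 Qv p2 h - dnorm2 (mvec (gamma j) Qv) p2 h.

Lemma fchart_differential j : is_differential (fchart j) p2 (df j).
Proof. apply is_differential_norm2_herm_sub. Qed.

(* The coefficients of x1 and x3 are taken relative to s7, so that the differentials at p2 have
   rational coefficient vectors. *)
Definition lform (a h : R4) : R :=
  x0 a * x0 h + x1 a * s7 * x1 h + x2 a * x2 h + x3 a * s7 * x3 h.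

Definition R4zero : R4 := mkR4 0 0 0 0.

Fixpoint comb (cs : list R) (rows : list R4) : R4 :=
  match cs, rows with
  | c :: cs', r :: rows' => R4add (R4scale c r) (comb cs' rows')
  | _, _ => R4zero
  end.

Lemma lin_comb_lform cs rows h : lin_comb cs (map lform rows) h = lform (comb cs rows) h.
Proof.
  revert rows. induction cs as [|c cs IH]; intros [|r rows]; cbn [map lin_comb comb];
    try (unfold lform; cbn; ring).
  rewrite IH. unfold lform, R4add, R4scale. cbn [x0 x1 x2 x3]. ring.
Qed.

Lemma lform_eq0 a : (forall h, lform a h = 0) -> a = R4zero.
Proof.
  intros H. pose proof s7_pos.
  pose proof (H (mkR4 1 0 0 0)). pose proof (H (mkR4 0 1 0 0)).
  pose proof (H (mkR4 0 0 1 0)). pose proof (H (mkR4 0 0 0 1)).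
  unfold lform in *. cbn [x0 x1 x2 x3] in *. destruct a as [a0 a1 a2 a3]. cbn [x0 x1 x2 x3] in *.
  unfold R4zero. f_equal; nra.
Qed.

Lemma lin_indep_lform rows :
  lin_indep (map lform rows) <->
  (forall cs, length cs = length rows -> comb cs rows = R4zero -> forall c, In c cs -> c = 0).
Proof.
  unfold lin_indep. rewrite length_map. split; intros Hind cs Hlen Hcomb.
  - apply (Hind cs Hlen). intros h. rewrite lin_comb_lform, Hcomb. unfold lform; cbn; ring.
  - apply (Hind cs Hlen). apply lform_eq0. intros h. rewrite <- lin_comb_lform. apply Hcomb.
Qed.

Definition drow (j : nat) : R4 :=
  match j with
  | 1 => mkR4 2 0 3 1
  | 2 => mkR4 2 0 0 0
  | 3 => mkR4 (5/2) (-1/2) (3/2) (1/2)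
  | 5 => mkR4 (3/2) (1/2) (-1) 1
  | 10 => mkR4 (3/2) (1/2) (3/2) (1/2)
  | 11 => mkR4 (5/2) (-1/2) 4 0
  | _ => R4zero
  end%nat.

Lemma df_lform j : In j six -> df j = lform (drow j).
Proof.
  assert (G5 : mvec (gamma 5) Qv = mvec (mpow G1 1) (mvec (gamma 1) Qv))
    by exact (gamma_conj_G1_Q 0 0 ltac:(lia)).
  assert (G10 : mvec (gamma 10) Qv = mvec (mpow (minv G1) 1) (mvec (gamma 2) Qv))
    by exact (gamma_conj_G1_inv_Q 0 1 ltac:(lia)).
  assert (G11 : mvec (gamma 11) Qv = mvec (mpow (minv G1) 1) (mvec (gamma 3) Qv))
    by exact (gamma_conj_G1_inv_Q 0 2 ltac:(lia)).
  cbn [six In]. intros Hj. apply functional_extensionality. intros [h0 h1 h2 h3].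
  unfold df, dnorm2.
  destruct Hj as [<-|[<-|[<-|[<-|[<-|[<-|[]]]]]]];
    rewrite ?G5, ?G10, ?G11, ?gamma_1_Q, ?gamma_2_Q, ?gamma_3_Q;
    unfold w1, w2, w3; rewrite ?mvec_G1_pow, ?mvec_G1_inv_pow;
    unfold cvec, p2, lin, lform, drow; cunfold; cbn [INR]; s7_ring.
Qed.

Lemma lin_comb_perm Ls Ls' : Permutation Ls Ls' ->
  forall cs', length cs' = length Ls' ->
  exists cs, length cs = length Ls /\ Permutation cs cs' /\
             forall h, lin_comb cs Ls h = lin_comb cs' Ls' h.
Proof.
  induction 1 as [| L Ls Ls' _ IH | L1 L2 Ls | Ls Ls' Ls'' _ IH1 _ IH2]; intros cs' Hlen.
  - exists []. destruct cs'; [|discriminate]. repeat split; auto.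
  - destruct cs' as [|c cs']; [discriminate|]. injection Hlen as Hlen.
    destruct (IH cs' Hlen) as (cs & Hl & Hp & Hc). exists (c :: cs).
    repeat split; cbn; auto. intros h. now rewrite Hc.
  - destruct cs' as [|c1 [|c2 cs']]; try discriminate. exists (c2 :: c1 :: cs').
    repeat split; [cbn in *; lia | apply perm_swap | intros h; cbn; ring].
  - destruct (IH2 cs' Hlen) as (cs1 & Hl1 & Hp1 & Hc1).
    destruct (IH1 cs1 Hl1) as (cs & Hl & Hp & Hc).
    exists cs. repeat split; [exact Hl | eapply Permutation_trans; eauto | intros h; now rewrite Hc].
Qed.

Lemma lin_indep_perm Ls Ls' : Permutation Ls Ls' -> lin_indep Ls -> lin_indep Ls'.
Proof.
  intros HP Hind cs' Hlen Hz c Hc.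
  destruct (lin_comb_perm Ls Ls' HP cs' Hlen) as (cs & Hl & Hp & Hcomb).
  apply (Hind cs Hl); [intros h; rewrite Hcomb; apply Hz|].
  exact (Permutation_in _ (Permutation_sym Hp) Hc).
Qed.

Lemma Permutation_filter_mem (L S : list nat) :
  NoDup L -> NoDup S -> incl S L -> Permutation S (filter (fun x => existsb (Nat.eqb x) S) L).
Proof.
  intros HL HS Hincl. apply NoDup_Permutation; [exact HS | now apply NoDup_filter|].
  intros x. rewrite filter_In, existsb_exists. split.
  - intros Hx. split; [now apply Hincl|]. exists x. split; [exact Hx | apply Nat.eqb_refl].
  - intros [_ (y & Hy & Hxy)]. apply Nat.eqb_eq in Hxy. now subst.
Qed.

Lemma Permutation_forallb_mem (l l' : list nat) :
  Permutation l l' -> forallb (fun x => existsb (Nat.eqb x) l) l' = true.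
Proof.
  intros HP. apply forallb_forall. intros x Hx. apply existsb_exists.
  exists x. split; [exact (Permutation_in _ (Permutation_sym HP) Hx) | apply Nat.eqb_refl].
Qed.

Lemma NoDup_six : NoDup six.
Proof. repeat constructor; cbn; lia. Qed.

Lemma map_df S : incl S six -> map df S = map lform (map drow S).
Proof.
  intros Hincl. rewrite map_map. apply map_ext_in. intros j Hj. apply df_lform, Hincl, Hj.
Qed.

Ltac comb_indep :=
  apply lin_indep_lform; intros cs Hcs Hcomb c Hc;
  destruct cs as [|c1 [|c2 [|c3 [|c4 [|? ?]]]]]; cbn [length] in Hcs; try discriminate;
  cbn [comb drow map] in Hcomb; unfold R4add, R4scale, R4zero in Hcomb; cbn [x0 x1 x2 x3] in Hcomb;
  injection Hcomb as E0 E1 E2 E3; cbn [In] in Hc; repeat destruct Hc as [<-|Hc]; try contradiction; lra.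

Lemma df_indep_small S : NoDup S -> incl S six -> (length S = 2 \/ length S = 3)%nat ->
  lin_indep (map df S).
Proof.
  intros HS Hincl Hlen.
  pose proof (Permutation_filter_mem six S NoDup_six HS Hincl) as HP.
  apply (lin_indep_perm (map df (filter (fun x => existsb (Nat.eqb x) S) six)));
    [now apply Permutation_map, Permutation_sym|].
  rewrite map_df by (intros x Hx; apply filter_In in Hx; apply Hx).
  apply Permutation_length in HP. unfold six in *. cbn [filter] in *.
  destruct (existsb (Nat.eqb 1) S), (existsb (Nat.eqb 2) S), (existsb (Nat.eqb 3) S),
    (existsb (Nat.eqb 5) S), (existsb (Nat.eqb 10) S), (existsb (Nat.eqb 11) S);
    cbn [length] in HP; try lia; comb_indep.
Qed.

Lemma lin_indep_comb_dep rows cs c :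
  length cs = length rows -> comb cs rows = R4zero -> In c cs -> c <> 0 ->
  ~ lin_indep (map lform rows).
Proof.
  intros Hlen Hcomb Hc Hc0 Hind. rewrite lin_indep_lform in Hind.
  exact (Hc0 (Hind cs Hlen Hcomb c Hc)).
Qed.

Ltac comb_dep cs :=
  apply (lin_indep_comb_dep _ cs 1); [reflexivity | | cbn; tauto | apply R1_neq_R0];
  cbn [comb drow map]; unfold R4add, R4scale, R4zero; cbn [x0 x1 x2 x3]; f_equal; field.

Lemma df_dep_quadruple S : NoDup S -> incl S six -> length S = 4%nat ->
  (~ lin_indep (map df S) <->
     Permutation S [1; 2; 3; 10]%nat \/ Permutation S [1; 2; 5; 11]%nat \/
     Permutation S [3; 5; 10; 11]%nat).
Proof.
  intros HS Hincl Hlen.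
  pose proof (Permutation_filter_mem six S NoDup_six HS Hincl) as HP.
  set (S' := filter (fun x => existsb (Nat.eqb x) S) six) in HP.
  assert (Hind : lin_indep (map df S) <-> lin_indep (map df S')).
  { split; apply lin_indep_perm, Permutation_map; [|apply Permutation_sym]; exact HP. }
  assert (Hperm : forall X, Permutation S X <-> Permutation S' X).
  { intros X. split; apply Permutation_trans; [apply Permutation_sym|]; exact HP. }
  rewrite Hind, !Hperm, map_df by (intros x Hx; apply filter_In in Hx; apply Hx).
  apply Permutation_length in HP. unfold S', six in *. cbn [filter] in *.
  destruct (existsb (Nat.eqb 1) S), (existsb (Nat.eqb 2) S), (existsb (Nat.eqb 3) S),
    (existsb (Nat.eqb 5) S), (existsb (Nat.eqb 10) S), (existsb (Nat.eqb 11) S);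
    cbn [length] in HP; try lia;
    first
      [ split; [intros _; left; reflexivity | intros _; comb_dep [1; 1; -1; -1]]
      | split; [intros _; right; left; reflexivity | intros _; comb_dep [1; 1; -1; -1]]
      | split; [intros _; right; right; reflexivity | intros _; comb_dep [1; -1; 1; -1]]
      | split; [intros Hdep; exfalso; apply Hdep; comb_indep
               | intros [Q|[Q|Q]]; apply Permutation_forallb_mem in Q; discriminate Q] ].
Qed.

Theorem proposition5p11 :
  exists p2 : R4,
    fixed_by_G2 p2 /\ (forall q, fixed_by_G2 q -> q = p2) /\
    (forall j : nat, (1 <= j)%nat -> (in_bisector j p2 <-> In j six)) /\
    exists df : nat -> (R4 -> R),
      (forall j : nat, (1 <= j)%nat -> is_differential (fchart j) p2 (df j)) /\
      (forall S : list nat, NoDup S -> incl S six ->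
         (length S = 2 \/ length S = 3)%nat -> lin_indep (map df S)) /\
      (forall S : list nat, NoDup S -> incl S six -> length S = 4%nat ->
         (~ lin_indep (map df S) <->
            Permutation S [1; 2; 3; 10]%nat \/
            Permutation S [1; 2; 5; 11]%nat \/
            Permutation S [3; 5; 10; 11]%nat)).
Proof.
  exists p2. split; [exact p2_fixed|]. split; [exact fixed_by_G2_unique|]. split.
  - intros j Hj. unfold in_bisector. rewrite <- (fchart_p2_zero_iff j Hj).
    pose proof (proj1 p2_fixed). tauto.
  - exists df. split; [intros j _; apply fchart_differential|].
    split; [exact df_indep_small | exact df_dep_quadruple].
Qed.
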